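(* Consider the uplink system described in the context, with $U$ users, user $u$ having $N_u$ transmit antennas, $L_u$ propagation paths, power budget $P_u>0$ and aperture $W_u>0$. Let $C^*$ denote the supremum of $$C(\mathbf Q_1,\dots,\mathbf Q_U,\mathbf w_1,\dots,\mathbf w_U)=\log\Big|\sum_{u=1}^U \mathbf G_u(\mathbf w_u)\mathbf Q_u\mathbf G_u^H(\mathbf w_u)+\mathbf I_M\Big|$$ over all $\mathbf Q_u\in\mathbb C^{N_u\times N_u}$ with $\mathbf Q_u\succeq \mathbf 0$, $\mathrm{tr}(\mathbf Q_u)\le P_u$, and all $\mathbf w_u=[w_{u,1},\dots,w_{u,N_u}]^T$ with $0\le w_{u,n}\le W_u$ and $w_{u,n}\neq w_{u,n'}$ for $n\ne n'$ ($u=1,\dots,U$). Then $C^*$ is upper bounded by the optimal value of the convex problem $$\max_{\tilde{\mathbf Q}_1,\dots,\tilde{\mathbf Q}_U}\ \log\Big|\sum_{u=1}^U M N_u \mathbf A_{u,\mathrm R}\boldsymbol\Gamma_u\tilde{\mathbf Q}_u\boldsymbol\Gamma_u^H\mathbf A_{u,\mathrm R}^H+\mathbf I_M\Big|\quad\text{s.t. } \tilde{\mathbf Q}_u\in\mathbb C^{L_u\times L_u},\ \tilde{\mathbf Q}_u\succeq\mathbf 0,\ \mathrm{tr}(\tilde{\mathbf Q}_u)\le L_uP_u,\ u=1,\dots,U.$$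
   Context: A base station (BS) has an $M$-antenna uniform linear array with spacing $d=\lambda/2$ ($\lambda$ the wavelength). User $u\in\{1,\dots,U\}$ has $N_u$ antennas placed at positions $w_{u,1},\dots,w_{u,N_u}\in[0,W_u]$ on a line. There are $L_u$ propagation paths between user $u$ and the BS, with complex gains $\gamma_{u,1},\dots,\gamma_{u,L_u}$, angles of arrival $\beta_{u,l}\in[0,\pi]$ and angles of departure $\theta_{u,l}\in[0,\pi]$. Define $\mathbf a_{u,\mathrm R}(\beta)=\frac1{\sqrt M}[1,e^{-j\frac{2\pi}{\lambda}d\cos\beta},\dots,e^{-j\frac{2\pi}{\lambda}(M-1)d\cos\beta}]^T$ and $\mathbf a_{u,\mathrm T}(\theta,\mathbf w_u)=\frac1{\sqrt{N_u}}[e^{-j\frac{2\pi}{\lambda}w_{u,1}\cos\theta},\dots,e^{-j\frac{2\pi}{\lambda}w_{u,N_u}\cos\theta}]^T$. Let $\boldsymbol\Gamma_u=\mathrm{diag}(\gamma_{u,1},\dots,\gamma_{u,L_u})$, $\mathbf A_{u,\mathrm R}=[\mathbf a_{u,\mathrm R}(\beta_{u,1}),\dots,\mathbf a_{u,\mathrm R}(\beta_{u,L_u})]\in\mathbb C^{M\times L_u}$, $\mathbf A_{u,\mathrm T}(\mathbf w_u)=[\mathbf a_{u,\mathrm T}(\theta_{u,1},\mathbf w_u),\dots,\mathbf a_{u,\mathrm T}(\theta_{u,L_u},\mathbf w_u)]\in\mathbb C^{N_u\times L_u}$, and the channel matrix $\mathbf G_u(\mathbf w_u)=\sqrt{MN_u}\,\mathbf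 A_{u,\mathrm R}\boldsymbol\Gamma_u\mathbf A_{u,\mathrm T}^H(\mathbf w_u)\in\mathbb C^{M\times N_u}$. $|\cdot|$ denotes determinant. *)

From HB Require Import structures.
From mathcomp Require Import all_boot all_order all_algebra.
From mathcomp Require Import all_classical all_reals all_analysis.
From mathcomp Require Import complex.
Set Implicit Arguments. Unset Strict Implicit. Unset Printing Implicit Defensive.
Import Order.TTheory GRing.Theory Num.Theory.
Local Open Scope ring_scope.
Local Open Scope complex_scope.

Section Defs.
Variable R : realType.
Local Notation C := R[i].

Definition ctmx m n (A : 'M[C]_(m, n)) : 'M[C]_(n, m) := (map_mx Num.conj A)^T.

Definition psd n (Q : 'M[C]_n) : Prop :=
  ctmx Q = Q /\ forall x : 'cV[C]_n, 0 <= (ctmx x *m Q *m x) 0 0.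

Definition expj (t : R) : C := (cos t) +i* (sin t).

(* receive steering vector a_R(beta), antenna spacing d, wavelength lam *)
Definition aR (M : nat) (lam d beta : R) : 'cV[C]_M :=
  \col_(m < M) (((Num.sqrt (M%:R : R))^-1)%:C
                 * expj (- (2 * pi / lam * (m%:R * d) * cos beta))).

Definition aT (N : nat) (lam : R) (w : 'I_N -> R) (theta : R) : 'cV[C]_N :=
  \col_(n < N) (((Num.sqrt (N%:R : R))^-1)%:C
                 * expj (- (2 * pi / lam * w n * cos theta))).

Definition ARmx (M L : nat) (lam d : R) (beta : 'I_L -> R) : 'M[C]_(M, L) :=
  \matrix_(m < M, l < L) aR M lam d (beta l) m 0.

Definition ATmx (N L : nat) (lam : R) (w : 'I_N -> R) (theta : 'I_L -> R)
  : 'M[C]_(N, L) := \matrix_(n < N, l < L) aT lam w (theta l) n 0.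

Definition Gammamx (L : nat) (gamma : 'I_L -> C) : 'M[C]_L :=
  diag_mx (\row_(l < L) gamma l).

Definition Gch (M N L : nat) (lam : R) (gamma : 'I_L -> C) (beta theta : 'I_L -> R)
  (w : 'I_N -> R) : 'M[C]_(M, N) :=
  (Num.sqrt ((M * N)%:R : R))%:C *:
    (ARmx M lam (lam / 2) beta *m Gammamx gamma *m ctmx (ATmx lam w theta)).

(* log of determinant; the matrices involved are Hermitian PD, so the
   determinant is real positive and we take ln of its real part *)
Definition logdet M (A : 'M[C]_M) : R := ln (complex.Re (\det A)).

End Defs.

From HB Require Import structures.
From mathcomp Require Import all_boot all_order all_algebra.
From mathcomp Require Import all_classical all_reals all_analysis.
From mathcomp Require Import complex.
From mathcomp Require Import ring.
Import Order.TTheory GRing.Theory Num.Theory.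
Local Open Scope ring_scope.
Local Open Scope complex_scope.

(** Every feasible point (Q_u, w_u) of the left-hand problem yields the
    feasible point Qt_u := A_T(w_u)^H Q_u A_T(w_u) of the right-hand problem
    with the same objective value, because G_u Q_u G_u^H factors through
    A_T^H Q_u A_T.  Congruence preserves positive semidefiniteness, and the
    power constraint survives with the factor L_u: for a PSD matrix Q of size n,
    summing the nonnegative quadratic forms of x_i e_i - x_j e_j over all i, j
    gives x^H Q x <= n * sum_i |x_i|^2 Q_ii, and every entry of A_T has modulus
    1/sqrt N_u, so each column contributes at most tr Q_u. *)

Section Channel.
Set Implicit Arguments.
Unset Strict Implicit.
Variable R : realType.
Local Notation C := R[i].

Lemma ctmx_mul m n p (A : 'M[C]_(m, n)) (B : 'M[C]_(n, p)) :
  ctmx (A *m B) = ctmx B *m ctmx A.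
Proof. by rewrite /ctmx map_mxM trmx_mul. Qed.

Lemma ctmxK m n (A : 'M[C]_(m, n)) : ctmx (ctmx A) = A.
Proof. by apply/matrixP => i j; rewrite !mxE conjCK. Qed.

Lemma ctmxB m n (A B : 'M[C]_(m, n)) : ctmx (A - B) = ctmx A - ctmx B.
Proof. by apply/matrixP => i j; rewrite !mxE rmorphB. Qed.

Lemma ctmxZ m n a (A : 'M[C]_(m, n)) : ctmx (a *: A) = a^* *: ctmx A.
Proof. by apply/matrixP => i j; rewrite !mxE rmorphM. Qed.

Lemma ctmx_delta n (i : 'I_n) : ctmx (delta_mx i 0 : 'cV[C]_n) = delta_mx 0 i.
Proof.
by apply/matrixP => a b; rewrite !mxE; case: (a == 0); case: (b == i);
  rewrite ?conjC1 ?conjC0.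
Qed.

Definition qform n (Q : 'M[C]_n) (x : 'cV[C]_n) : C := (ctmx x *m Q *m x) 0 0.

Lemma qformE n (Q : 'M[C]_n) (x : 'cV[C]_n) :
  qform Q x = \sum_i \sum_j (x i 0)^* * Q i j * x j 0.
Proof.
rewrite /qform mxE exchange_big; apply: eq_bigr => j _.
by rewrite mxE big_distrl; apply: eq_bigr => i _; rewrite !mxE.
Qed.

Lemma qform_pair n (Q : 'M[C]_n) (x : 'cV[C]_n) i j :
  qform Q (x i 0 *: delta_mx i 0 - x j 0 *: delta_mx j 0) =
  `|x i 0| ^+ 2 * Q i i + `|x j 0| ^+ 2 * Q j j
    - (x i 0)^* * Q i j * x j 0 - (x j 0)^* * Q j i * x i 0.
Proof.
rewrite /qform ctmxB !ctmxZ !ctmx_delta !(mulmxBl, mulmxBr).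
by rewrite -!scalemxAl -!scalemxAr -!rowE -!colE !mxE !normCKC; ring.
Qed.

Lemma sumr_pairs (V : zmodType) n (a : 'I_n -> V) (b : 'I_n -> 'I_n -> V) :
  \sum_i \sum_j (a i + a j - b i j - b j i) =
  ((\sum_i a i) *+ n - \sum_i \sum_j b i j) *+ 2.
Proof.
under eq_bigr do rewrite !sumrB big_split sumr_const card_ord /=.
rewrite !sumrB big_split /= sumrMnl sumr_const card_ord.
rewrite [\sum_i \sum_j b j i]exchange_big /=.
by rewrite mulr2n addrACA -!addrA.
Qed.

Lemma psd_qform_le n (Q : 'M[C]_n) (x : 'cV[C]_n) : psd Q ->
  qform Q x <= n%:R * \sum_i `|x i 0| ^+ 2 * Q i i.
Proof.
move=> [_ Q_ge0].
have : 0 <= \sum_i \sum_j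
               qform Q (x i 0 *: delta_mx i 0 - x j 0 *: delta_mx j 0).
  by apply: sumr_ge0 => i _; apply: sumr_ge0 => j _; apply: Q_ge0.
under eq_bigr do under eq_bigr do rewrite qform_pair.
by rewrite sumr_pairs -qformE pmulrn_lge0 // subr_ge0 mulr_natl.
Qed.

Lemma psd_ctmx_mul n m (Q : 'M[C]_n) (A : 'M[C]_(n, m)) :
  psd Q -> psd (ctmx A *m Q *m A).
Proof.
move=> [Q_herm Q_ge0]; split; first by rewrite !ctmx_mul ctmxK Q_herm mulmxA.
by move=> x; have := Q_ge0 (A *m x); rewrite ctmx_mul !mulmxA.
Qed.

Lemma mxtrace_qform_col n m (Q : 'M[C]_n) (A : 'M[C]_(n, m)) :
  \tr (ctmx A *m Q *m A) = \sum_l qform Q (col l A).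
Proof.
apply: eq_bigr => l _; rewrite qformE mxE exchange_big; apply: eq_bigr => j _.
by rewrite mxE big_distrl; apply: eq_bigr => i _; rewrite !mxE.
Qed.

Lemma mxtrace_ctmx_mul_le n m (Q : 'M[C]_n) (A : 'M[C]_(n, m)) :
  psd Q -> (forall i l, n%:R * `|A i l| ^+ 2 = 1) ->
  \tr (ctmx A *m Q *m A) <= m%:R * \tr Q.
Proof.
move=> Q_psd A_norm.
rewrite mxtrace_qform_col mulr_natl -[m in _ *+ m]card_ord -sumr_const.
apply: ler_sum => l _; apply: le_trans (psd_qform_le _ Q_psd) _.
by rewrite mulr_sumr; under eq_bigr do rewrite mxE mulrA A_norm mul1r.
Qed.

Lemma norm_expj (t : R) : `|expj t| = 1.
Proof. by rewrite normc_def /= cos2Dsin2 sqrtr1. Qed.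

Lemma sqr_norm_ATmx N L lam (w : 'I_N -> R) (theta : 'I_L -> R) n l :
  N%:R * `|ATmx lam w theta n l| ^+ 2 = 1.
Proof.
have N_gt0 : (0 < N)%N := leq_ltn_trans (leq0n n) (ltn_ord n).
have sN_gt0 : 0 < Num.sqrt (N%:R : R) by rewrite sqrtr_gt0 ltr0n.
rewrite !mxE normrM norm_expj mulr1 ger0_norm; last first.
  by rewrite lecR invr_ge0 ltW.
rewrite -rmorphXn /= exprVn sqr_sqrtr ?ler0n // -(rmorph_nat (real_complex R)).
by rewrite -rmorphM /= mulfV ?pnatr_eq0 -?lt0n.
Qed.

Lemma Gch_mul_ctmx M N L lam (gamma : 'I_L -> C) (beta theta : 'I_L -> R)
    (w : 'I_N -> R) (Q : 'M[C]_N) :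
  let G := Gch M lam gamma beta theta w in
  let AR := ARmx M lam (lam / 2) beta in
  G *m Q *m ctmx G =
  ((M * N)%:R : C) *: (AR *m Gammamx gamma
     *m (ctmx (ATmx lam w theta) *m Q *m ATmx lam w theta)
     *m ctmx (Gammamx gamma) *m ctmx AR).
Proof.
rewrite /= /Gch ctmxZ !ctmx_mul ctmxK.
set s := Num.sqrt _; have -> : Num.conj s%:C = s%:C := conjc_real s.
rewrite -!scalemxAl -scalemxAr scalerA -rmorphM /= -expr2 sqr_sqrtr ?ler0n //.
by rewrite (rmorph_nat (real_complex R)) !mulmxA.
Qed.

End Channel.

Theorem theorem1 (R : realType) (M U : nat) (N L : 'I_U -> nat)
  (lam : R) (P W : 'I_U -> R)
  (gamma : forall u : 'I_U, 'I_(L u) -> R[i])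
  (beta theta : forall u : 'I_U, 'I_(L u) -> R) :
  0 < lam ->
  (forall u, 0 < P u) -> (forall u, 0 < W u) ->
  (forall u l, 0 <= beta u l <= pi) -> (forall u l, 0 <= theta u l <= pi) ->
  (ereal_sup [set r : \bar R | exists (Q : forall u : 'I_U, 'M[R[i]]_(N u))
                                     (w : forall u : 'I_U, 'I_(N u) -> R),
      [/\ forall u, (psd (Q u) /\ \tr (Q u) <= (P u)%:C)%R,
          forall u, ((forall n, 0 <= w u n <= W u) /\ injective (w u))%R &
          r = (logdet
                (\sum_(u < U) (Gch M lam (gamma u) (beta u) (theta u) (w u) *m Q u
                   *m ctmx (Gch M lam (gamma u) (beta u) (theta u) (w u)))
                 + 1%:M))%:E]]
   <=
   ereal_sup [set r : \bar R | exists (Qt : forall u : 'I_U, 'M[R[i]]_(L u)),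
      (forall u, psd (Qt u) /\ \tr (Qt u) <= ((L u)%:R * P u)%:C)%R /\
      r = (logdet
        (\sum_(u < U) ((M * N u)%:R : R[i]) *:
             (ARmx M lam (lam / 2) (beta u) *m Gammamx (gamma u) *m Qt u
              *m ctmx (Gammamx (gamma u)) *m ctmx (ARmx M lam (lam / 2) (beta u)))
         + 1%:M))%:E])%E.
Proof.
move=> _ _ _ _ _; apply: ereal_sup_le => _ [Q [w [Q_feas _ ->]]].
pose AT u := ATmx lam (w u) (theta u).
exists (fun u => ctmx (AT u) *m Q u *m AT u); split.
  move=> u; have [Q_psd trQ_le] := Q_feas u; split; first exact: psd_ctmx_mul.
  have := mxtrace_ctmx_mul_le Q_psd (sqr_norm_ATmx lam (w u) (theta u)).
  move/le_trans; apply.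
  by rewrite rmorphM /= (rmorph_nat (real_complex R)) ler_wpM2l ?ler0n.
by congr (logdet (_ + _))%:E; apply: eq_bigr => u _; apply: Gch_mul_ctmx.
Qed.
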